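(* For $\epsilon>0$, $a\geq0$ with $\epsilon a$ belonging to a bounded interval, let $u_{\epsilon,a}$ be solutions of $\epsilon^2\Delta u+\mu u-|u|^2u+\epsilon af=0$ on $\mathbb{R}^2$ with $u_{\epsilon,a}(x)\to0$ as $|x|\to\infty$. Then the maps $u_{\epsilon,a}$ and $\epsilon\nabla u_{\epsilon,a}$ are uniformly bounded (on $\mathbb{R}^2$, uniformly in $\epsilon,a$).
   Context: $\mu\in C^\infty(\mathbb{R}^2,\mathbb{R})$ is radial, $\mu(x)=\mu_{\mathrm{rad}}(|x|)$, $\mu\in L^\infty$, $\mu_{\mathrm{rad}}'<0$ on $(0,\infty)$, $\mu_{\mathrm{rad}}(\rho)=0$ for a unique $\rho>0$ ($\mu_{\mathrm{rad}}$ smooth with an even extension). $f\in C^\infty(\mathbb{R}^2,\mathbb{R}^2)$, $f(x)=f_{\mathrm{rad}}(|x|)\frac{x}{|x|}$, $f_{\mathrm{rad}}$ smooth with an odd extension, $f\in L^1\cap L^\infty$, $f_{\mathrm{rad}}>0$ on $(0,\infty)$. *)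

(* concrete reals R with Coquelicot derivatives / integrals.
   Points of R^2 are pairs of coordinates (x, y); R^2-valued maps are given
   by their two component functions. *)
From Stdlib Require Import Reals List.
From Coquelicot Require Import Coquelicot.
Open Scope R_scope.

Definition dx (g : R -> R -> R) : R -> R -> R :=
  fun x y => Derive (fun t => g t y) x.
Definition dy (g : R -> R -> R) : R -> R -> R :=
  fun x y => Derive (fun t => g x t) y.

(* iterated partial derivative along a word of directions (true = x, false = y) *)
Fixpoint iter_partial (l : list bool) (g : R -> R -> R) : R -> R -> R :=
  match l with
  | nil => g
  | b :: l' => (if b then dx else dy) (iter_partial l' g)
  end.

Definition Ck2 (k : nat) (g : R -> R -> R) : Prop :=
  (forall l : list bool, (length l < k)%nat ->
      forall x y, ex_derive (fun t => iter_partial l g t y) x /\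
                  ex_derive (fun t => iter_partial l g x t) y)
  /\ (forall l : list bool, (length l <= k)%nat ->
      forall x y, continuous (fun p : R * R => iter_partial l g (fst p) (snd p)) (x, y)).

Definition smooth2 (g : R -> R -> R) : Prop := forall k, Ck2 k g.

Definition smooth1 (h : R -> R) : Prop := forall n x, ex_derive_n h n x.

Definition norm2 (x y : R) : R := sqrt (x ^ 2 + y ^ 2).

Definition lap (g : R -> R -> R) : R -> R -> R :=
  fun x y => dx (dx g) x y + dy (dy g) x y.

(* L^infinity (for continuous functions: bounded everywhere) *)
Definition bounded2 (g : R -> R -> R) : Prop :=
  exists B, forall x y, Rabs (g x y) <= B.

(* L^1(R^2) for a continuous function: the (iterated Riemann) integrals of |g|
   over the squares [-N,N]^2 are uniformly bounded *)
Definition integrable2 (g : R -> R -> R) : Prop :=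
  exists B, forall N, 0 < N ->
    RInt (fun x => RInt (fun y => Rabs (g x y)) (- N) N) (- N) N <= B.

(* As u vanishes at infinity, |u|^2 attains its maximum at some point, where
   u . Delta u <= 0; there the equations give |u|^4 <= mu |u|^2 + eps a (f . u), which
   bounds |u| uniformly in eps and a, and then the equations bound eps^2 Delta u.
   The gradient bound is a scaled interior estimate: the odd part w of a component
   of u under the reflection in the line {x = x0} vanishes on that line, and on the
   rectangle [x0, x0 + eps] x [y0 - eps, y0 + eps] the maximum principle shows that
   +-w is dominated by an explicit quadratic barrier phi, because
   eps^2 Delta phi < -|eps^2 Delta w|.  Hence |w (x0 + t, y0)| <= C t / eps, that is
   eps |d_x u (x0, y0)| <= C; d_y is handled by exchanging the coordinates. *)

From Stdlib Require Import Reals Lra Psatz FunctionalExtensionality IndefiniteDescription.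
From Coquelicot Require Import Coquelicot.
Open Scope R_scope.

Lemma Rabs_le_norm2 (a b : R) : Rabs a <= norm2 a b /\ Rabs b <= norm2 a b.
Proof.
  unfold norm2. split; rewrite <- sqrt_Rsqr_abs; apply sqrt_le_1_alt; unfold Rsqr;
    generalize (Rle_0_sqr a) (Rle_0_sqr b); unfold Rsqr; lra.
Qed.

Lemma is_derive2_ge0_at_local_min (h h' : R -> R) (t0 h2 delta : R) :
  0 < delta ->
  (forall t, Rabs (t - t0) < delta -> is_derive h t (h' t)) ->
  is_derive h' t0 h2 ->
  (forall t, Rabs (t - t0) < delta -> h t0 <= h t) ->
  0 <= h2.
Proof.
  intros Hdelta Hd Hd2 Hmin.
  assert (Hlim : forall t, Rabs (t - t0) < delta -> derivable_pt_lim h t (h' t))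
    by (intros t Ht; apply is_derive_Reals, Hd, Ht).
  assert (Hcrit : h' t0 = 0).
  { assert (Ht0 : Rabs (t0 - t0) < delta) by (rewrite Rminus_eq_0, Rabs_R0; exact Hdelta).
    rewrite <- (derive_pt_eq_0 h t0 (h' t0) (exist _ _ (Hlim t0 Ht0)) (Hlim t0 Ht0)).
    apply deriv_minimum with (t0 - delta) (t0 + delta); [lra | lra |].
    intros t H1 H2. apply Hmin, Rabs_def1; lra. }
  destruct (Rle_or_lt 0 h2) as [| Hneg]; [assumption | exfalso].
  apply is_derive_Reals in Hd2.
  destruct (Hd2 (- h2)) as [delta' Hdelta']; [lra |].
  assert (Hdecr : forall s, 0 < s < delta' -> h' (t0 + s) < 0).
  { intros s Hs. specialize (Hdelta' s ltac:(lra) ltac:(rewrite Rabs_pos_eq; lra)).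
    rewrite Hcrit, Rminus_0_r in Hdelta'. apply Rabs_def2 in Hdelta'.
    assert (E : h' (t0 + s) = h' (t0 + s) / s * s) by (field; lra).
    assert (h' (t0 + s) / s < 0) by lra. nra. }
  assert (Hdelta'0 := cond_pos delta').
  set (s := Rmin delta delta' / 2).
  assert (Hs : 0 < s < delta /\ s < delta').
  { unfold s. generalize (Rmin_l delta delta') (Rmin_r delta delta').
    assert (0 < Rmin delta delta') by (apply Rmin_pos; lra). lra. }
  destruct (MVT_cor2 h h' t0 (t0 + s)) as [xi [Hmvt Hxi]]; [lra | |].
  { intros c Hc. apply Hlim, Rabs_def1; lra. }
  assert (h' xi < 0) by (replace xi with (t0 + (xi - t0)) by ring; apply Hdecr; lra).
  assert (h (t0 + s) < h t0) by nra.
  assert (h t0 <= h (t0 + s)) by (apply Hmin; rewrite Rabs_pos_eq; lra).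
  lra.
Qed.

Lemma Rabs_is_derive_le (g : R -> R) (x0 L c delta : R) :
  is_derive g x0 L -> g x0 = 0 -> 0 < delta ->
  (forall t, 0 < t < delta -> Rabs (g (x0 + t)) <= c * t) ->
  Rabs L <= c.
Proof.
  intros Hd Hg0 Hdelta Hb.
  destruct (Rle_or_lt (Rabs L) c) as [| Hlt]; [assumption | exfalso].
  apply is_derive_Reals in Hd.
  destruct (Hd (Rabs L - c)) as [delta' Hdelta']; [lra |].
  assert (Hdelta'0 := cond_pos delta').
  set (t := Rmin delta delta' / 2).
  assert (Ht : 0 < t < delta /\ t < delta').
  { unfold t. generalize (Rmin_l delta delta') (Rmin_r delta delta').
    assert (0 < Rmin delta delta') by (apply Rmin_pos; lra). lra. }
  specialize (Hdelta' t ltac:(lra) ltac:(rewrite Rabs_pos_eq; lra)).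
  rewrite Hg0, Rminus_0_r in Hdelta'.
  assert (Hq : Rabs (g (x0 + t) / t) <= c).
  { unfold Rdiv. rewrite Rabs_mult, Rabs_inv, (Rabs_pos_eq t) by lra.
    apply (Rmult_le_reg_r t); [lra |].
    rewrite Rmult_assoc, Rinv_l, Rmult_1_r by lra. apply Hb; lra. }
  assert (Rabs L <= Rabs (g (x0 + t) / t) + Rabs (g (x0 + t) / t - L)).
  { replace L with (g (x0 + t) / t - (g (x0 + t) / t - L)) at 1 by ring.
    unfold Rminus at 1. eapply Rle_trans; [apply Rabs_triang |].
    rewrite Rabs_Ropp. lra. }
  lra.
Qed.

Lemma continuity_2d_pt_slice (z : R -> R -> R) (x y : R) :
  continuity_2d_pt z x y -> continuity_pt (fun t => z x t) y.
Proof.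
  intros Hc eps Heps. destruct (Hc (mkposreal eps Heps)) as [delta Hdelta].
  exists delta. split; [apply cond_pos |]. intros t [_ Ht].
  apply Hdelta; [rewrite Rminus_eq_0, Rabs_R0; apply cond_pos | exact Ht].
Qed.

Lemma continuity_2d_rectangle_min (z : R -> R -> R) (a b c d : R) :
  a <= b -> c <= d -> (forall x y, continuity_2d_pt z x y) ->
  exists p q, a <= p <= b /\ c <= q <= d /\
    forall x y, a <= x <= b -> c <= y <= d -> z p q <= z x y.
Proof.
  intros Hab Hcd Hc.
  destruct (functional_choice (fun x m =>
      c <= m <= d /\ forall y, c <= y <= d -> z x m <= z x y)) as [ym Hym].
  { intros x. destruct (continuity_ab_min (fun t => z x t) c d Hcd) as [m [Hm Hmcd]].
    - intros y _. apply continuity_2d_pt_slice, Hc.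
    - exists m. split; assumption. }
  (* [x |-> min_y z x y] is continuous by uniform continuity of z *)
  assert (Hcont : forall x0, a <= x0 <= b -> continuity_pt (fun x => z x (ym x)) x0).
  { intros x0 Hx0 eps Heps.
    destruct (uniform_continuity_2d z (a - 1) (b + 1) c d (fun x y _ _ => Hc x y)
                (mkposreal eps Heps)) as [delta Hdelta].
    exists (Rmin delta 1). split; [apply Rmin_pos; [apply cond_pos | lra] |].
    intros x [_ Hx]. simpl in Hx |- *. unfold R_dist in *.
    assert (Hx1 : Rabs (x - x0) < delta) by (eapply Rlt_le_trans; [exact Hx | apply Rmin_l]).
    assert (Hx2 : Rabs (x - x0) < 1) by (eapply Rlt_le_trans; [exact Hx | apply Rmin_r]).
    apply Rabs_def2 in Hx2.
    destruct (Hym x) as [Hyx Hminx]. destruct (Hym x0) as [Hyx0 Hminx0].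
    assert (Hsame : forall w, Rabs (w - w) < delta)
      by (intros w; rewrite Rminus_eq_0, Rabs_R0; apply cond_pos).
    assert (E1 : Rabs (z x (ym x0) - z x0 (ym x0)) < eps)
      by (apply Hdelta; auto; lra).
    assert (E2 : Rabs (z x0 (ym x) - z x (ym x)) < eps)
      by (apply Hdelta; auto; try lra; rewrite Rabs_minus_sym; exact Hx1).
    apply Rabs_def2 in E1. apply Rabs_def2 in E2.
    specialize (Hminx (ym x0) Hyx0). specialize (Hminx0 (ym x) Hyx).
    apply Rabs_def1; lra. }
  destruct (continuity_ab_min (fun x => z x (ym x)) a b Hab Hcont) as [p [Hp Hpab]].
  exists p, (ym p). split; [exact Hpab |]. split; [apply Hym |].
  intros x y Hx Hy. apply Rle_trans with (z x (ym x)); [exact (Hp x Hx) |].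
  apply (proj2 (Hym x)), Hy.
Qed.

Record twice_partially_differentiable (g : R -> R -> R) : Prop := {
  tpd_continuous : forall x y, continuity_2d_pt g x y;
  tpd_ex_dx : forall x y, ex_derive (fun t => g t y) x;
  tpd_ex_dxx : forall x y, ex_derive (fun t => dx g t y) x;
  tpd_ex_dy : forall x y, ex_derive (fun t => g x t) y;
  tpd_ex_dyy : forall x y, ex_derive (fun t => dy g x t) y }.
Arguments tpd_continuous {g}. Arguments tpd_ex_dx {g}. Arguments tpd_ex_dxx {g}.
Arguments tpd_ex_dy {g}. Arguments tpd_ex_dyy {g}.

Lemma Ck2_twice_partially_differentiable (g : R -> R -> R) :
  Ck2 2 g -> twice_partially_differentiable g.
Proof.
  intros [Hder Hcont].
  assert (L0 : (length (@nil bool) < 2)%nat) by (simpl; lia).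
  assert (Lx : (length (true :: nil) < 2)%nat) by (simpl; lia).
  assert (Ly : (length (false :: nil) < 2)%nat) by (simpl; lia).
  split; intros x y.
  - apply continuity_2d_pt_filterlim, (Hcont nil). simpl. lia.
  - exact (proj1 (Hder nil L0 x y)).
  - exact (proj1 (Hder _ Lx x y)).
  - exact (proj2 (Hder nil L0 x y)).
  - exact (proj2 (Hder _ Ly x y)).
Qed.

Ltac ex_derive_slices :=
  repeat split;
  match goal with
  | H : twice_partially_differentiable ?g |- ex_derive (fun t => ?g t ?y) ?x =>
      exact (tpd_ex_dx H x y)
  | H : twice_partially_differentiable ?g |- ex_derive (fun t => dx ?g t ?y) ?x =>
      exact (tpd_ex_dxx H x y)
  | H : twice_partially_differentiable ?g |- ex_derive (fun t => ?g ?x t) ?y =>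
      exact (tpd_ex_dy H x y)
  | H : twice_partially_differentiable ?g |- ex_derive (fun t => dy ?g ?x t) ?y =>
      exact (tpd_ex_dyy H x y)
  end.

Lemma twice_partially_differentiable_swap (g : R -> R -> R) :
  twice_partially_differentiable g ->
  twice_partially_differentiable (fun a b => g b a).
Proof.
  intros Hg. split; intros x y.
  - intros eps. destruct (tpd_continuous Hg y x eps) as [delta Hdelta].
    exists delta. intros a b Ha Hb. apply Hdelta; assumption.
  - exact (tpd_ex_dy Hg y x).
  - exact (tpd_ex_dyy Hg y x).
  - exact (tpd_ex_dx Hg y x).
  - exact (tpd_ex_dxx Hg y x).
Qed.

Lemma lap_swap (g : R -> R -> R) (x y : R) :
  lap (fun a b => g b a) x y = lap g y x.
Proof. unfold lap. apply Rplus_comm. Qed.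

Section LinearCombination.

Variables (alpha beta : R).

Lemma dx_lincomb (g h : R -> R -> R) :
  (forall x y, ex_derive (fun t => g t y) x) -> (forall x y, ex_derive (fun t => h t y) x) ->
  dx (fun a b => alpha * g a b + beta * h a b) = (fun a b => alpha * dx g a b + beta * dx h a b).
Proof.
  intros Hg Hh. extensionality a. extensionality b. unfold dx.
  rewrite Derive_plus by (apply ex_derive_scal; auto).
  now rewrite !Derive_scal.
Qed.

Lemma dy_lincomb (g h : R -> R -> R) :
  (forall x y, ex_derive (fun t => g x t) y) -> (forall x y, ex_derive (fun t => h x t) y) ->
  dy (fun a b => alpha * g a b + beta * h a b) = (fun a b => alpha * dy g a b + beta * dy h a b).
Proof.
  intros Hg Hh. extensionality a. extensionality b. unfold dy.
  rewrite Derive_plus by (apply ex_derive_scal; auto).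
  now rewrite !Derive_scal.
Qed.

Variables (g h : R -> R -> R).
Hypotheses (Hg : twice_partially_differentiable g) (Hh : twice_partially_differentiable h).

Lemma twice_partially_differentiable_lincomb :
  twice_partially_differentiable (fun a b => alpha * g a b + beta * h a b).
Proof.
  split; intros x y.
  - apply continuity_2d_pt_plus; apply continuity_2d_pt_mult;
      first [apply continuity_2d_pt_const | apply tpd_continuous; assumption].
  - auto_derive. ex_derive_slices.
  - rewrite dx_lincomb by (intros; ex_derive_slices). auto_derive. ex_derive_slices.
  - auto_derive. ex_derive_slices.
  - rewrite dy_lincomb by (intros; ex_derive_slices). auto_derive. ex_derive_slices.
Qed.

Lemma lap_lincomb (x y : R) :
  lap (fun a b => alpha * g a b + beta * h a b) x y = alpha * lap g x y + beta * lap h x y.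
Proof.
  unfold lap.
  rewrite (dx_lincomb g h), (dx_lincomb (dx g) (dx h)), (dy_lincomb g h), (dy_lincomb (dy g) (dy h))
    by (intros; ex_derive_slices).
  ring.
Qed.

End LinearCombination.

Section Reflection.

Variable x0 : R.

Lemma dx_xreflect (g : R -> R -> R) :
  (forall x y, ex_derive (fun t => g t y) x) ->
  dx (fun a b => g (2 * x0 - a) b) = (fun a b => - dx g (2 * x0 - a) b).
Proof.
  intros Hg. extensionality a. extensionality b.
  apply is_derive_unique. auto_derive; [apply Hg | unfold dx, Rminus; ring].
Qed.

Variable g : R -> R -> R.
Hypothesis Hg : twice_partially_differentiable g.

Lemma twice_partially_differentiable_xreflect :
  twice_partially_differentiable (fun a b => g (2 * x0 - a) b).
Proof.
  split; intros x y.
  - intros eps. destruct (tpd_continuous Hg (2 * x0 - x) y eps) as [delta Hdelta].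
    exists delta. intros a b Ha Hb. apply Hdelta; [| exact Hb].
    replace (2 * x0 - a - (2 * x0 - x)) with (- (a - x)) by ring.
    rewrite Rabs_Ropp. exact Ha.
  - auto_derive. ex_derive_slices.
  - rewrite dx_xreflect by (intros; ex_derive_slices). auto_derive. ex_derive_slices.
  - exact (tpd_ex_dy Hg (2 * x0 - x) y).
  - exact (tpd_ex_dyy Hg (2 * x0 - x) y).
Qed.

Lemma lap_xreflect (x y : R) :
  lap (fun a b => g (2 * x0 - a) b) x y = lap g (2 * x0 - x) y.
Proof.
  unfold lap. rewrite dx_xreflect by (intros; ex_derive_slices).
  unfold dx at 1. rewrite Derive_opp.
  change (- dx (fun a b => dx g (2 * x0 - a) b) x y + dy (dy g) (2 * x0 - x) y
          = dx (dx g) (2 * x0 - x) y + dy (dy g) (2 * x0 - x) y).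
  rewrite dx_xreflect by (intros; ex_derive_slices). ring.
Qed.

End Reflection.

Definition paraboloid (x0 y0 alpha beta gamma : R) : R -> R -> R :=
  fun a b => alpha * (a - x0) + beta * (a - x0) ^ 2 + gamma * (b - y0) ^ 2.

Section Paraboloid.

Variables x0 y0 alpha beta gamma : R.

Lemma dx_paraboloid :
  dx (paraboloid x0 y0 alpha beta gamma) = (fun a b => alpha + 2 * beta * (a - x0)).
Proof.
  extensionality a. extensionality b.
  apply is_derive_unique. unfold paraboloid. auto_derive; [easy | ring].
Qed.

Lemma dy_paraboloid :
  dy (paraboloid x0 y0 alpha beta gamma) = (fun a b => 2 * gamma * (b - y0)).
Proof.
  extensionality a. extensionality b.
  apply is_derive_unique. unfold paraboloid. auto_derive; [easy | ring].
Qed.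

Lemma twice_partially_differentiable_paraboloid :
  twice_partially_differentiable (paraboloid x0 y0 alpha beta gamma).
Proof.
  split; intros x y.
  - unfold paraboloid. simpl.
    repeat first [apply continuity_2d_pt_plus | apply continuity_2d_pt_minus
      | apply continuity_2d_pt_mult | apply continuity_2d_pt_const
      | apply continuity_2d_pt_id1 | apply continuity_2d_pt_id2].
  - unfold paraboloid. auto_derive. easy.
  - rewrite dx_paraboloid. auto_derive. easy.
  - unfold paraboloid. auto_derive. easy.
  - rewrite dy_paraboloid. auto_derive. easy.
Qed.

Lemma lap_paraboloid (x y : R) :
  lap (paraboloid x0 y0 alpha beta gamma) x y = 2 * beta + 2 * gamma.
Proof.
  unfold lap. rewrite dx_paraboloid, dy_paraboloid.
  unfold dx, dy; cbv beta.
  f_equal; apply is_derive_unique; auto_derive; try easy; ring.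
Qed.

End Paraboloid.

Lemma lap_ge0_at_local_min (z : R -> R -> R) (p q delta : R) :
  twice_partially_differentiable z -> 0 < delta ->
  (forall x y, Rabs (x - p) < delta -> Rabs (y - q) < delta -> z p q <= z x y) ->
  0 <= lap z p q.
Proof.
  intros Hz Hdelta Hmin.
  assert (H0 : Rabs (0 : R) < delta) by (rewrite Rabs_R0; exact Hdelta).
  unfold lap. apply Rplus_le_le_0_compat.
  - apply (is_derive2_ge0_at_local_min (fun t => z t q) (fun t => dx z t q) p _ delta Hdelta).
    + intros t _. apply Derive_correct. ex_derive_slices.
    + apply Derive_correct. ex_derive_slices.
    + intros t Ht. apply Hmin; [exact Ht | rewrite Rminus_eq_0; exact H0].
  - apply (is_derive2_ge0_at_local_min (fun t => z p t) (fun t => dy z p t) q _ delta Hdelta).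
    + intros t _. apply Derive_correct. ex_derive_slices.
    + apply Derive_correct. ex_derive_slices.
    + intros t Ht. apply Hmin; [rewrite Rminus_eq_0; exact H0 | exact Ht].
Qed.

Lemma rectangle_min_principle (z : R -> R -> R) (a b c d : R) :
  a <= b -> c <= d -> twice_partially_differentiable z ->
  (forall x y, a < x < b -> c < y < d -> lap z x y < 0) ->
  (forall x y, a <= x <= b -> c <= y <= d -> (x = a \/ x = b \/ y = c \/ y = d) ->
     0 <= z x y) ->
  forall x y, a <= x <= b -> c <= y <= d -> 0 <= z x y.
Proof.
  intros Hab Hcd Hz Hlap Hbd.
  destruct (continuity_2d_rectangle_min z a b c d Hab Hcd (tpd_continuous Hz))
    as [p [q [Hp [Hq Hmin]]]].
  intros x y Hx Hy. apply Rle_trans with (z p q); [| exact (Hmin x y Hx Hy)].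
  destruct (Rle_or_lt 0 (z p q)) as [| Hneg]; [assumption | exfalso].
  assert (Hint : a < p < b /\ c < q < d).
  { destruct Hp as [[Hp1 | Hp1] [Hp2 | Hp2]], Hq as [[Hq1 | Hq1] [Hq2 | Hq2]];
      try (assert (0 <= z p q) by (apply Hbd; auto; lra); lra).
    auto. }
  set (delta := Rmin (Rmin (p - a) (b - p)) (Rmin (q - c) (d - q))).
  assert (Hdelta : 0 < delta) by (unfold delta; repeat apply Rmin_pos; lra).
  assert (Hbox : delta <= p - a /\ delta <= b - p /\ delta <= q - c /\ delta <= d - q).
  { unfold delta.
    generalize (Rmin_l (Rmin (p - a) (b - p)) (Rmin (q - c) (d - q)))
      (Rmin_r (Rmin (p - a) (b - p)) (Rmin (q - c) (d - q)))
      (Rmin_l (p - a) (b - p)) (Rmin_r (p - a) (b - p))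
      (Rmin_l (q - c) (d - q)) (Rmin_r (q - c) (d - q)).
    lra. }
  assert (0 <= lap z p q).
  { apply (lap_ge0_at_local_min z p q delta Hz Hdelta).
    intros x' y' Hx' Hy'. apply Rabs_def2 in Hx'. apply Rabs_def2 in Hy'.
    apply Hmin; lra. }
  assert (lap z p q < 0) by (apply Hlap; tauto).
  lra.
Qed.

Lemma continuity_2d_vanishing_at_infinity_max (g : R -> R -> R) (x y : R) :
  (forall x y, continuity_2d_pt g x y) ->
  (forall e, 0 < e -> exists Rr, forall x y, Rr < norm2 x y -> g x y < e) ->
  0 < g x y ->
  exists p q, forall a b, g a b <= g p q.
Proof.
  intros Hc Hdec Hpos.
  destruct (Hdec _ Hpos) as [Rr HRr].
  set (L := Rabs Rr + Rabs x + Rabs y).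
  assert (HL : 0 <= L /\ Rr <= L /\ Rabs x <= L /\ Rabs y <= L).
  { unfold L. generalize (Rle_abs Rr) (Rabs_pos Rr) (Rabs_pos x) (Rabs_pos y). lra. }
  destruct (continuity_2d_rectangle_min (fun a b => - g a b) (- L) L (- L) L)
    as [p [q [_ [_ Hmin]]]]; try lra.
  { intros a b. apply continuity_2d_pt_opp, Hc. }
  assert (Hsquare : forall a b, Rabs a <= L -> Rabs b <= L -> g a b <= g p q).
  { intros a b Ha Hb. apply Rabs_le_between in Ha, Hb.
    assert (- g p q <= - g a b) by (apply Hmin; lra). lra. }
  exists p, q. intros a b.
  assert (g x y <= g p q) by (apply Hsquare; apply HL).
  destruct (Rlt_or_le Rr (norm2 a b)) as [Hfar | Hnear].
  - generalize (HRr a b Hfar). lra.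
  - destruct (Rabs_le_norm2 a b). apply Hsquare; lra.
Qed.

Lemma dot_Derive2_le0_at_max (v1 v2 : R -> R) (t0 : R) :
  (forall t, ex_derive v1 t) -> (forall t, ex_derive v2 t) ->
  ex_derive (Derive v1) t0 -> ex_derive (Derive v2) t0 ->
  (forall t, v1 t ^ 2 + v2 t ^ 2 <= v1 t0 ^ 2 + v2 t0 ^ 2) ->
  v1 t0 * Derive (Derive v1) t0 + v2 t0 * Derive (Derive v2) t0 <= 0.
Proof.
  intros Hv1 Hv2 Hv1' Hv2' Hmax.
  assert (H : 0 <= - (2 * Derive v1 t0 ^ 2 + 2 * v1 t0 * Derive (Derive v1) t0
                      + 2 * Derive v2 t0 ^ 2 + 2 * v2 t0 * Derive (Derive v2) t0)).
  { apply (is_derive2_ge0_at_local_min (fun t => - (v1 t ^ 2 + v2 t ^ 2))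
             (fun t => - (2 * v1 t * Derive v1 t + 2 * v2 t * Derive v2 t)) t0 _ 1 Rlt_0_1).
    (* [auto_derive] eta-expands [v1] into [fun x => v1 x], which [ring] does not
       identify with [v1]. *)
    - intros t _. auto_derive; [auto |].
      change (fun x => v1 x) with v1. change (fun x => v2 x) with v2. ring.
    - auto_derive; [repeat split; auto |].
      change (fun x => v1 x) with v1. change (fun x => v2 x) with v2.
      change (fun x => Derive v1 x) with (Derive v1).
      change (fun x => Derive v2 x) with (Derive v2). ring.
    - intros t _. generalize (Hmax t). lra. }
  nra.
Qed.

Lemma dot_lap_le0_at_max (u1 u2 : R -> R -> R) (p q : R) :
  twice_partially_differentiable u1 -> twice_partially_differentiable u2 ->
  (forall x y, u1 x y ^ 2 + u2 x y ^ 2 <= u1 p q ^ 2 + u2 p q ^ 2) ->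
  u1 p q * lap u1 p q + u2 p q * lap u2 p q <= 0.
Proof.
  intros Hu1 Hu2 Hmax.
  assert (Hx : u1 p q * dx (dx u1) p q + u2 p q * dx (dx u2) p q <= 0).
  { apply (dot_Derive2_le0_at_max (fun t => u1 t q) (fun t => u2 t q)).
    - intros t. exact (tpd_ex_dx Hu1 t q).
    - intros t. exact (tpd_ex_dx Hu2 t q).
    - exact (tpd_ex_dxx Hu1 p q).
    - exact (tpd_ex_dxx Hu2 p q).
    - intros t. apply Hmax. }
  assert (Hy : u1 p q * dy (dy u1) p q + u2 p q * dy (dy u2) p q <= 0).
  { apply (dot_Derive2_le0_at_max (fun t => u1 p t) (fun t => u2 p t)).
    - intros t. exact (tpd_ex_dy Hu1 p t).
    - intros t. exact (tpd_ex_dy Hu2 p t).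
    - exact (tpd_ex_dyy Hu1 p q).
    - exact (tpd_ex_dyy Hu2 p q).
    - intros t. apply Hmax. }
  unfold lap. lra.
Qed.

Lemma sum_sq_le_of_quartic_le (P Q m g1 g2 Bm F : R) :
  m <= Bm -> 0 <= Bm -> Rabs g1 <= F -> Rabs g2 <= F ->
  (P ^ 2 + Q ^ 2) ^ 2 <= m * (P ^ 2 + Q ^ 2) + P * g1 + Q * g2 ->
  P ^ 2 + Q ^ 2 <= 1 + Bm + 2 * F.
Proof.
  intros Hm HBm Hg1 Hg2 Hquartic.
  assert (HF : 0 <= F) by (generalize (Rabs_pos g1); lra).
  set (w := P ^ 2 + Q ^ 2) in *.
  destruct (Rle_or_lt w 1) as [| Hw]; [lra |].
  assert (Hww : w <= w ^ 2) by nra.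
  assert (HP : P ^ 2 <= w ^ 2 /\ Q ^ 2 <= w ^ 2)
    by (generalize (pow2_ge_0 P) (pow2_ge_0 Q); unfold w in *; lra).
  assert (- w <= P <= w /\ - w <= Q <= w) by (split; split; nra).
  apply Rabs_le_between in Hg1, Hg2.
  assert (P * g1 <= w * F /\ Q * g2 <= w * F) by (split; nra).
  assert (m * w <= Bm * w) by nra.
  nra.
Qed.

Lemma Rabs_cubic_residual_le (m u w g Bm A F : R) :
  Rabs m <= Bm -> Rabs u <= A -> 0 <= w <= A ^ 2 -> Rabs g <= F ->
  Rabs (- (m * u) + w * u - g) <= Bm * A + A ^ 3 + F.
Proof.
  intros Hm Hu Hw Hg.
  apply Rabs_le_between in Hm, Hu, Hg.
  apply Rabs_le. split; nra.
Qed.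

Section GinzburgLandauSystem.

Variables (eps Bm F : R) (mu g1 g2 u1 u2 : R -> R -> R).
Hypotheses
  (Hmu : forall x y, Rabs (mu x y) <= Bm)
  (Hg : forall x y, Rabs (g1 x y) <= F /\ Rabs (g2 x y) <= F)
  (Hu1 : twice_partially_differentiable u1) (Hu2 : twice_partially_differentiable u2)
  (E1 : forall x y, eps ^ 2 * lap u1 x y + mu x y * u1 x y
                    - (u1 x y ^ 2 + u2 x y ^ 2) * u1 x y + g1 x y = 0)
  (E2 : forall x y, eps ^ 2 * lap u2 x y + mu x y * u2 x y
                    - (u1 x y ^ 2 + u2 x y ^ 2) * u2 x y + g2 x y = 0).

Lemma GL_sum_sq_le :
  (forall e, 0 < e -> exists Rr, forall x y, Rr < norm2 x y -> norm2 (u1 x y) (u2 x y) < e) ->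
  forall x y, u1 x y ^ 2 + u2 x y ^ 2 <= 1 + Bm + 2 * F.
Proof.
  intros Hdec x y.
  set (W := fun a b => u1 a b ^ 2 + u2 a b ^ 2).
  change (W x y <= 1 + Bm + 2 * F).
  assert (HBm : 0 <= Bm) by (generalize (Hmu 0 0) (Rabs_pos (mu 0 0)); lra).
  assert (HF : 0 <= F) by (generalize (proj1 (Hg 0 0)) (Rabs_pos (g1 0 0)); lra).
  destruct (Rle_or_lt (W x y) 0) as [| Hpos]; [lra |].
  destruct (continuity_2d_vanishing_at_infinity_max W x y) as [p [q Hmax]]; [| | exact Hpos |].
  - intros a b. apply continuity_2d_pt_ext with (fun a b => u1 a b * u1 a b + u2 a b * u2 a b).
    { intros; unfold W; ring. }
    apply continuity_2d_pt_plus; apply continuity_2d_pt_mult; apply tpd_continuous; assumption.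
  - intros e He. destruct (Hdec (sqrt e) (sqrt_lt_R0 e He)) as [Rr HRr].
    exists Rr. intros a b Hab. apply sqrt_lt_0_alt, HRr, Hab.
  - assert (Hdot := dot_lap_le0_at_max u1 u2 p q Hu1 Hu2 Hmax).
    assert (Hscaled : u1 p q * (eps ^ 2 * lap u1 p q) + u2 p q * (eps ^ 2 * lap u2 p q) <= 0).
    { replace (u1 p q * (eps ^ 2 * lap u1 p q) + u2 p q * (eps ^ 2 * lap u2 p q))
        with (eps ^ 2 * (u1 p q * lap u1 p q + u2 p q * lap u2 p q)) by ring.
      generalize (pow2_ge_0 eps). nra. }
    replace (eps ^ 2 * lap u1 p q) with (- (mu p q * u1 p q) + W p q * u1 p q - g1 p q)
      in Hscaled by (generalize (E1 p q); unfold W; lra).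
    replace (eps ^ 2 * lap u2 p q) with (- (mu p q * u2 p q) + W p q * u2 p q - g2 p q)
      in Hscaled by (generalize (E2 p q); unfold W; lra).
    apply Rle_trans with (W p q); [apply Hmax |].
    apply (sum_sq_le_of_quartic_le _ _ (mu p q) (g1 p q) (g2 p q)); try apply Hg; auto.
    + generalize (Hmu p q). intros H. apply Rabs_le_between in H. lra.
    + unfold W in *. nra.
Qed.

Lemma GL_eps2_lap_le (A : R) :
  (forall x y, norm2 (u1 x y) (u2 x y) <= A) ->
  forall x y, Rabs (eps ^ 2 * lap u1 x y) <= Bm * A + A ^ 3 + F /\
              Rabs (eps ^ 2 * lap u2 x y) <= Bm * A + A ^ 3 + F.
Proof.
  intros HA x y.
  destruct (Rabs_le_norm2 (u1 x y) (u2 x y)) as [H1 H2].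
  assert (HW : 0 <= u1 x y ^ 2 + u2 x y ^ 2 <= A ^ 2).
  { assert (Hn : 0 <= norm2 (u1 x y) (u2 x y) <= A) by (split; [apply sqrt_pos | apply HA]).
    unfold norm2 in Hn. rewrite <- (sqrt_sqrt (u1 x y ^ 2 + u2 x y ^ 2)) by
      (generalize (pow2_ge_0 (u1 x y)) (pow2_ge_0 (u2 x y)); lra).
    split; [apply Rle_0_sqr | nra]. }
  split.
  - replace (eps ^ 2 * lap u1 x y)
      with (- (mu x y * u1 x y) + (u1 x y ^ 2 + u2 x y ^ 2) * u1 x y - g1 x y)
      by (generalize (E1 x y); lra).
    apply Rabs_cubic_residual_le; try apply Hg; auto. generalize (HA x y); lra.
  - replace (eps ^ 2 * lap u2 x y)
      with (- (mu x y * u2 x y) + (u1 x y ^ 2 + u2 x y ^ 2) * u2 x y - g2 x y)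
      by (generalize (E2 x y); lra).
    apply Rabs_cubic_residual_le; try apply Hg; auto. generalize (HA x y); lra.
Qed.

End GinzburgLandauSystem.

Definition xodd_part (x0 : R) (v : R -> R -> R) : R -> R -> R :=
  fun a b => / 2 * v a b + - / 2 * v (2 * x0 - a) b.

Lemma xodd_part_on_axis (x0 : R) (v : R -> R -> R) (b : R) : xodd_part x0 v x0 b = 0.
Proof. unfold xodd_part. replace (2 * x0 - x0) with x0 by ring. field. Qed.

Lemma Rabs_xodd_part_le (x0 A : R) (v : R -> R -> R) :
  (forall x y, Rabs (v x y) <= A) -> forall a b, Rabs (xodd_part x0 v a b) <= A.
Proof.
  intros HvA a b. unfold xodd_part.
  generalize (HvA a b) (HvA (2 * x0 - a) b). intros H1 H2.
  apply Rabs_le_between in H1, H2. apply Rabs_le. lra.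
Qed.

Lemma is_derive_xodd_part_on_axis (x0 y0 : R) (v : R -> R -> R) :
  twice_partially_differentiable v ->
  is_derive (fun a => xodd_part x0 v a y0) x0 (dx v x0 y0).
Proof.
  intros Hv. unfold xodd_part. auto_derive; [ex_derive_slices |].
  unfold dx, Rminus. replace (2 * x0 + - x0) with x0 by ring. field.
Qed.

Lemma twice_partially_differentiable_xodd_part (x0 : R) (v : R -> R -> R) :
  twice_partially_differentiable v -> twice_partially_differentiable (xodd_part x0 v).
Proof.
  intros Hv. apply twice_partially_differentiable_lincomb;
    [| apply twice_partially_differentiable_xreflect]; exact Hv.
Qed.

Lemma lap_xodd_part (x0 : R) (v : R -> R -> R) (x y : R) :
  twice_partially_differentiable v ->
  lap (xodd_part x0 v) x y = (lap v x y - lap v (2 * x0 - x) y) / 2.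
Proof.
  intros Hv. unfold xodd_part.
  rewrite lap_lincomb, lap_xreflect by (try apply twice_partially_differentiable_xreflect; exact Hv).
  field.
Qed.

(* The coefficients make eps^2 times its Laplacian equal to -(K+1) while it stays
   >= 0 on [x0, x0 + eps] x [y0 - eps, y0 + eps] and >= A on the sides a = x0 + eps
   and b = y0 +- eps of that rectangle. *)
Definition gradient_barrier (A K eps x0 y0 : R) : R -> R -> R :=
  paraboloid x0 y0 ((2 * A + (K + 1) / 2) / eps) (- (2 * A + K + 1) / (2 * eps ^ 2)) (A / eps ^ 2).

Section GradientEstimate.

Variables (v : R -> R -> R) (eps A K : R).
Hypotheses (Heps : 0 < eps) (HA : 0 <= A) (HK : 0 <= K)
  (Hv : twice_partially_differentiable v)
  (HvA : forall x y, Rabs (v x y) <= A)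
  (HvK : forall x y, Rabs (eps ^ 2 * lap v x y) <= K).

Lemma gradient_barrier_scaled (x0 y0 a b : R) :
  gradient_barrier A K eps x0 y0 a b =
  (2 * A + (K + 1) / 2) * ((a - x0) / eps) - (2 * A + K + 1) / 2 * ((a - x0) / eps) ^ 2
  + A * ((b - y0) / eps) ^ 2.
Proof. unfold gradient_barrier, paraboloid. field. lra. Qed.

Lemma eps2_lap_gradient_barrier (x0 y0 x y : R) :
  eps ^ 2 * lap (gradient_barrier A K eps x0 y0) x y = - (K + 1).
Proof. unfold gradient_barrier. rewrite lap_paraboloid. field. lra. Qed.

Lemma gradient_barrier_lower_bounds (x0 y0 x y : R) :
  x0 <= x <= x0 + eps ->
  0 <= gradient_barrier A K eps x0 y0 x y /\
  (x = x0 + eps \/ y = y0 - eps \/ y = y0 + eps -> A <= gradient_barrier A K eps x0 y0 x y).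
Proof.
  intros Hx. rewrite gradient_barrier_scaled.
  assert (Hr : 0 <= (x - x0) / eps <= 1).
  { split; [apply Rdiv_le_0_compat; lra |]. apply -> Rdiv_le_1; lra. }
  set (r := (x - x0) / eps) in *.
  assert (Hprofile : 0 <= (2 * A + (K + 1) / 2) * r - (2 * A + K + 1) / 2 * r ^ 2).
  { replace ((2 * A + (K + 1) / 2) * r - (2 * A + K + 1) / 2 * r ^ 2)
      with ((2 * A + K + 1) / 2 * (r * (1 - r)) + A * r) by field.
    apply Rplus_le_le_0_compat; apply Rmult_le_pos; nra. }
  assert (Hs : 0 <= ((y - y0) / eps) ^ 2) by apply pow2_ge_0.
  split; [nra |]. intros [E | [E | E]]; subst.
  - assert (r = 1) by (unfold r; field; lra). nra.
  - replace ((y0 - eps - y0) / eps) with (-1) by (field; lra). nra.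
  - replace ((y0 + eps - y0) / eps) with 1 by (field; lra). nra.
Qed.

Lemma signed_xodd_part_le_gradient_barrier (x0 y0 sigma : R) :
  sigma = 1 \/ sigma = -1 ->
  forall a b, x0 <= a <= x0 + eps -> y0 - eps <= b <= y0 + eps ->
  sigma * xodd_part x0 v a b <= gradient_barrier A K eps x0 y0 a b.
Proof.
  intros Hsigma a b Ha Hb.
  set (w := xodd_part x0 v). set (phi := gradient_barrier A K eps x0 y0).
  assert (Hw : twice_partially_differentiable w)
    by (apply twice_partially_differentiable_xodd_part, Hv).
  assert (Hw_le : forall a b, sigma * w a b <= A).
  { intros a' b'. generalize (Rabs_xodd_part_le x0 A v HvA a' b'). fold w. intros H.
    apply Rabs_le_between in H. destruct Hsigma; subst sigma; lra. }
  set (z := fun a b => 1 * phi a b + - sigma * w a b).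
  enough (0 <= z a b) by (unfold z in *; lra).
  apply (rectangle_min_principle z x0 (x0 + eps) (y0 - eps) (y0 + eps)); try lra.
  - apply twice_partially_differentiable_lincomb;
      [apply twice_partially_differentiable_paraboloid | exact Hw].
  - intros x y _ _. unfold z.
    rewrite lap_lincomb by (exact Hw || apply twice_partially_differentiable_paraboloid).
    assert (Hphi := eps2_lap_gradient_barrier x0 y0 x y). fold phi in Hphi.
    unfold w. rewrite lap_xodd_part by exact Hv.
    generalize (HvK x y) (HvK (2 * x0 - x) y). intros H1 H2.
    apply Rabs_le_between in H1, H2.
    assert (Heps2 : 0 < eps ^ 2) by (apply pow_lt; lra).
    enough (eps ^ 2 * (1 * lap phi x y + - sigma * ((lap v x y - lap v (2 * x0 - x) y) / 2)) < 0)
      by nra.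
    replace (eps ^ 2 * (1 * lap phi x y + - sigma * ((lap v x y - lap v (2 * x0 - x) y) / 2)))
      with (eps ^ 2 * lap phi x y
            - sigma * ((eps ^ 2 * lap v x y - eps ^ 2 * lap v (2 * x0 - x) y) / 2)) by field.
    rewrite Hphi. destruct Hsigma; subst sigma; lra.
  - intros x y Hx Hy Hbd. unfold z.
    destruct (gradient_barrier_lower_bounds x0 y0 x y Hx) as [Hphi0 HphiA]. fold phi in Hphi0, HphiA.
    destruct Hbd as [E | Hside].
    + subst x. unfold w. rewrite xodd_part_on_axis. lra.
    + generalize (HphiA Hside) (Hw_le x y). lra.
Qed.

Lemma Rabs_xodd_part_le_gradient_barrier (x0 y0 a b : R) :
  x0 <= a <= x0 + eps -> y0 - eps <= b <= y0 + eps ->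
  Rabs (xodd_part x0 v a b) <= gradient_barrier A K eps x0 y0 a b.
Proof.
  intros Ha Hb. apply Rabs_le.
  generalize (signed_xodd_part_le_gradient_barrier x0 y0 1 (or_introl eq_refl) a b Ha Hb)
    (signed_xodd_part_le_gradient_barrier x0 y0 (-1) (or_intror eq_refl) a b Ha Hb).
  lra.
Qed.

Lemma eps_Rabs_dx_le (x0 y0 : R) : eps * Rabs (dx v x0 y0) <= 2 * A + (K + 1) / 2.
Proof.
  assert (Hslope : Rabs (dx v x0 y0) <= (2 * A + (K + 1) / 2) / eps).
  { apply (Rabs_is_derive_le _ x0 _ _ eps (is_derive_xodd_part_on_axis x0 y0 v Hv)
             (xodd_part_on_axis x0 v y0) Heps).
    intros t Ht. eapply Rle_trans; [apply (Rabs_xodd_part_le_gradient_barrier x0 y0); lra |].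
    rewrite gradient_barrier_scaled.
    replace (x0 + t - x0) with t by ring. replace (y0 - y0) with 0 by ring.
    assert (0 <= (t / eps) ^ 2) by apply pow2_ge_0. unfold Rdiv in *. nra. }
  apply (Rmult_le_compat_l eps) in Hslope; [| lra].
  replace (eps * ((2 * A + (K + 1) / 2) / eps)) with (2 * A + (K + 1) / 2) in Hslope
    by (field; lra).
  exact Hslope.
Qed.

End GradientEstimate.

Lemma eps_Rabs_partial_le (v : R -> R -> R) (eps A K : R) :
  0 < eps -> 0 <= A -> 0 <= K -> twice_partially_differentiable v ->
  (forall x y, Rabs (v x y) <= A) ->
  (forall x y, Rabs (eps ^ 2 * lap v x y) <= K) ->
  forall x y, eps * Rabs (dx v x y) <= 2 * A + (K + 1) / 2 /\
              eps * Rabs (dy v x y) <= 2 * A + (K + 1) / 2.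
Proof.
  intros Heps HA HK Hv HvA HvK x y. split.
  - exact (eps_Rabs_dx_le v eps A K Heps HA HK Hv HvA HvK x y).
  - apply (eps_Rabs_dx_le (fun a b => v b a) eps A K Heps HA HK).
    + apply twice_partially_differentiable_swap, Hv.
    + intros a b. apply HvA.
    + intros a b. rewrite lap_swap. apply HvK.
Qed.

Lemma Rabs_scal_components_le (c M B f1 f2 : R) :
  0 <= c <= M -> norm2 f1 f2 <= B -> Rabs (c * f1) <= M * B /\ Rabs (c * f2) <= M * B.
Proof.
  intros Hc Hf. destruct (Rabs_le_norm2 f1 f2) as [H1 H2].
  rewrite !Rabs_mult, (Rabs_pos_eq c) by lra.
  split; apply Rmult_le_compat; lra || apply Rabs_pos.
Qed.

Lemma norm2_le_of_sum_sq_le (a b S : R) : 1 <= S -> a ^ 2 + b ^ 2 <= S -> norm2 a b <= S.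
Proof.
  intros HS Hab. unfold norm2. rewrite <- (sqrt_pow2 S) by lra.
  apply sqrt_le_1_alt. nra.
Qed.

Lemma eps_norm4_le (eps G d1 d2 d3 d4 : R) :
  0 <= eps ->
  eps * Rabs d1 <= G -> eps * Rabs d2 <= G -> eps * Rabs d3 <= G -> eps * Rabs d4 <= G ->
  eps * sqrt (d1 ^ 2 + d2 ^ 2 + d3 ^ 2 + d4 ^ 2) <= 2 * G.
Proof.
  intros Heps H1 H2 H3 H4.
  assert (HG : 0 <= G) by (generalize (Rmult_le_pos _ _ Heps (Rabs_pos d1)); lra).
  assert (Hsq : forall d, eps * Rabs d <= G -> (eps * d) ^ 2 <= G ^ 2).
  { intros d Hd. rewrite <- pow2_abs, Rabs_mult, (Rabs_pos_eq eps) by exact Heps.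
    apply pow_incr. split; [apply Rmult_le_pos; [exact Heps | apply Rabs_pos] | exact Hd]. }
  rewrite <- (sqrt_pow2 eps Heps), <- sqrt_mult_alt by apply pow2_ge_0.
  rewrite <- (sqrt_pow2 (2 * G)) by lra.
  apply sqrt_le_1_alt.
  generalize (Hsq d1 H1) (Hsq d2 H2) (Hsq d3 H3) (Hsq d4 H4). nra.
Qed.

Theorem mainTheorem5
  (mu : R -> R -> R) (mu_rad : R -> R)
  (f1 f2 : R -> R -> R) (f_rad : R -> R)
  (* mu : smooth, radial, bounded, decreasing profile with a unique positive zero *)
  (Hmu_smooth : smooth2 mu)
  (Hmu_rad : forall x y, mu x y = mu_rad (norm2 x y))
  (Hmu_rad_smooth : smooth1 mu_rad)
  (Hmu_rad_even : forall r, mu_rad (- r) = mu_rad r)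
  (Hmu_bdd : bounded2 mu)
  (Hmu_decr : forall r, 0 < r -> Derive mu_rad r < 0)
  (Hmu_zero : exists rho, 0 < rho /\ mu_rad rho = 0 /\
                 forall r, 0 < r -> mu_rad r = 0 -> r = rho)
  (* f = f_rad(|x|) x/|x| : smooth, radial, in L^1 and L^infinity *)
  (Hf1_smooth : smooth2 f1) (Hf2_smooth : smooth2 f2)
  (Hf1 : forall x y, f1 x y = f_rad (norm2 x y) * (x / norm2 x y))
  (Hf2 : forall x y, f2 x y = f_rad (norm2 x y) * (y / norm2 x y))
  (Hf_rad_smooth : smooth1 f_rad)
  (Hf_rad_odd : forall r, f_rad (- r) = - f_rad r)
  (Hf_L1 : integrable2 (fun x y => norm2 (f1 x y) (f2 x y)))
  (Hf_Linf : bounded2 (fun x y => norm2 (f1 x y) (f2 x y)))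
  (Hf_rad_pos : forall r, 0 < r -> 0 < f_rad r) :
  (* for every bounded range [0, M] of eps * a *)
  forall M : R,
  exists C : R,
  forall (eps a : R) (u1 u2 : R -> R -> R),
    0 < eps -> 0 <= a -> eps * a <= M ->
    Ck2 2 u1 -> Ck2 2 u2 ->
    (forall x y,
       eps ^ 2 * lap u1 x y + mu x y * u1 x y
       - (u1 x y ^ 2 + u2 x y ^ 2) * u1 x y + eps * a * f1 x y = 0) ->
    (forall x y,
       eps ^ 2 * lap u2 x y + mu x y * u2 x y
       - (u1 x y ^ 2 + u2 x y ^ 2) * u2 x y + eps * a * f2 x y = 0) ->
    (forall e, 0 < e -> exists Rr, forall x y, Rr < norm2 x y ->
        norm2 (u1 x y) (u2 x y) < e) ->
    forall x y,
      norm2 (u1 x y) (u2 x y) <= C /\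
      eps * sqrt (dx u1 x y ^ 2 + dy u1 x y ^ 2 + dx u2 x y ^ 2 + dy u2 x y ^ 2) <= C.
Proof.
  intros M.
  destruct Hmu_bdd as [Bm HBm]. destruct Hf_Linf as [Bf HBf].
  assert (HBm0 : 0 <= Bm) by (generalize (HBm 0 0) (Rabs_pos (mu 0 0)); lra).
  assert (HBf0 : 0 <= Bf) by (generalize (HBf 0 0) (Rabs_pos (norm2 (f1 0 0) (f2 0 0))); lra).
  set (F := Rabs M * Bf). set (S := 1 + Bm + 2 * F). set (K := Bm * S + S ^ 3 + F).
  assert (HF : 0 <= F) by (apply Rmult_le_pos; [apply Rabs_pos | exact HBf0]).
  assert (HS : 1 <= S) by (unfold S; lra).
  assert (HK : 0 <= K) by (unfold K; generalize (pow_le S 3 ltac:(lra)); nra).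
  exists (Rmax S (2 * (2 * S + (K + 1) / 2))).
  intros eps a u1 u2 Heps Ha HaM Hu1 Hu2 E1 E2 Hdec.
  apply Ck2_twice_partially_differentiable in Hu1, Hu2.
  assert (Hforce : forall x y, Rabs (eps * a * f1 x y) <= F /\ Rabs (eps * a * f2 x y) <= F).
  { intros x y. apply Rabs_scal_components_le.
    - split; [apply Rmult_le_pos | generalize (Rle_abs M)]; lra.
    - exact (Rle_trans _ _ _ (Rle_abs _) (HBf x y)). }
  assert (Hnorm : forall x y, norm2 (u1 x y) (u2 x y) <= S)
    by (intros x y; apply norm2_le_of_sum_sq_le;
        [exact HS | exact (GL_sum_sq_le eps Bm F mu _ _ u1 u2 HBm Hforce Hu1 Hu2 E1 E2 Hdec x y)]).
  assert (Hlap := GL_eps2_lap_le eps Bm F mu _ _ u1 u2 HBm Hforce E1 E2 S Hnorm).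
  intros x y. split; [eapply Rle_trans; [apply Hnorm | apply Rmax_l] |].
  eapply Rle_trans; [| apply Rmax_r].
  destruct (eps_Rabs_partial_le u1 eps S K Heps ltac:(lra) HK Hu1
              (fun x y => Rle_trans _ _ _ (proj1 (Rabs_le_norm2 _ _)) (Hnorm x y))
              (fun x y => proj1 (Hlap x y)) x y).
  destruct (eps_Rabs_partial_le u2 eps S K Heps ltac:(lra) HK Hu2
              (fun x y => Rle_trans _ _ _ (proj2 (Rabs_le_norm2 _ _)) (Hnorm x y))
              (fun x y => proj2 (Hlap x y)) x y).
  apply eps_norm4_le; [lra | assumption ..].
Qed.
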